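(* Let $(\mathfrak{g}_\sigma,\mathfrak{q})$ be a reductive $CR$-algebra with invariant complement $\mathfrak{q}^c$. Then every element $Z\in\sigma(\mathfrak{q})\setminus\mathfrak{q}$ of finite Levi-order admits a Levi-sequence of minimal length all of whose elements belong to $\mathfrak{q}\cap\sigma(\mathfrak{q}^c)$.
   Context: $\mathfrak{g}$ is a finite-dimensional complex Lie algebra, $\sigma$ an anti-$\mathbb{C}$-linear involution, $\mathfrak{g}_\sigma$ its fixed points; $(\mathfrak{g}_\sigma,\mathfrak{q})$ with $\mathfrak{q}$ a complex subalgebra of $\mathfrak{g}$ is a $CR$-algebra. It is reductive if there is a $\mathbb{C}$-linear complement $\mathfrak{q}^c$ of $\mathfrak{q}$ in $\mathfrak{g}$ (an invariant complement) with $[\mathfrak{q}\cap\sigma(\mathfrak{q}),\mathfrak{q}^c]\subseteq\mathfrak{q}^c$ and $\mathfrak{g}=(\mathfrak{q}\cap\sigma(\mathfrak{q}))\oplus(\mathfrak{q}\cap\sigma(\mathfrak{q}^c))\oplus(\mathfrak{q}^c\cap\sigma(\mathfrak{q}))\oplus(\mathfrak{q}^c\cap\sigma(\mathfrak{q}^c))$. Higher order commutators: $[X_1,\dots,X_h]=[[X_1,\dots,X_{h-1}],X_h]$. For $Z\in\sigma(\mathfrak{q})\setminus\mathfrak{q}$, a Levi-sequence is $(Z_1,\dots,Z_k)$ in $\mathfrak{q}$ with $[Z,Z_1,\dots,Z_k]\notin\mathfrak{q}+\sigma(\mathfrak{q})$; the Levi-order of $Z$ is the minimal length of a Levi-sequence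 ($+\infty$ if none exists). *)

From HB Require Import structures.
From mathcomp Require Import all_boot all_order all_algebra.
Set Implicit Arguments. Unset Strict Implicit. Unset Printing Implicit Defensive.
Import Order.TTheory GRing.Theory Num.Theory.
Local Open Scope ring_scope.

Definition lie_bracket (C : numClosedFieldType) (g : vectType C)
    (br : g -> g -> g) : Prop :=
  [/\ forall (a : C) x y z, br (a *: x + y) z = a *: br x z + br y z,
      forall x y, br x y = - br y x &
      forall x y z, br (br x y) z + br (br y z) x + br (br z x) y = 0].

Definition anti_involution (C : numClosedFieldType) (g : vectType C)
    (br : g -> g -> g) (sigma : g -> g) : Prop :=
  [/\ forall (a : C) x y, sigma (a *: x + y) = a^* *: sigma x + sigma y,
      forall x, sigma (sigma x) = x &
      forall x y, sigma (br x y) = br (sigma x) (sigma y)].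

(* membership in sigma(V) for a complex subspace V *)
Definition in_sig (C : numClosedFieldType) (g : vectType C)
    (sigma : g -> g) (V : {vspace g}) (x : g) : Prop := sigma x \in V.

Definition in_q_plus_sq (C : numClosedFieldType) (g : vectType C)
    (sigma : g -> g) (q : {vspace g}) (x : g) : Prop :=
  exists a b, a \in q /\ in_sig sigma q b /\ x = a + b.

Definition CR_algebra (C : numClosedFieldType) (g : vectType C)
    (br : g -> g -> g) (sigma : g -> g) (q : {vspace g}) : Prop :=
  [/\ lie_bracket br, anti_involution br sigma &
      forall x y, x \in q -> y \in q -> br x y \in q].

Definition reductive_CR (C : numClosedFieldType) (g : vectType C)
    (br : g -> g -> g) (sigma : g -> g) (q qc : {vspace g}) : Prop :=
  [/\ CR_algebra br sigma q,
      (q + qc = fullv)%VS /\ (q :&: qc = 0)%VS,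
      (forall x y, x \in q -> in_sig sigma q x -> y \in qc -> br x y \in qc),
      (forall x, exists a b c d,
         [/\ a \in q /\ in_sig sigma q a, b \in q /\ in_sig sigma qc b,
             c \in qc /\ in_sig sigma q c, d \in qc /\ in_sig sigma qc d &
             x = a + b + c + d]) &
      (forall a b c d,
         a \in q -> in_sig sigma q a -> b \in q -> in_sig sigma qc b ->
         c \in qc -> in_sig sigma q c -> d \in qc -> in_sig sigma qc d ->
         a + b + c + d = 0 -> [/\ a = 0, b = 0, c = 0 & d = 0])].

Definition iter_br (C : numClosedFieldType) (g : vectType C)
    (br : g -> g -> g) (Z : g) (Zs : seq g) : g := foldl br Z Zs.

Definition levi_seq (C : numClosedFieldType) (g : vectType C)
    (br : g -> g -> g) (sigma : g -> g) (q : {vspace g}) (Z : g) (Zs : seq g)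
    : Prop :=
  (forall W, W \in Zs -> W \in q) /\ ~ in_q_plus_sq sigma q (iter_br br Z Zs).

Definition finite_levi_order (C : numClosedFieldType) (g : vectType C)
    (br : g -> g -> g) (sigma : g -> g) (q : {vspace g}) (Z : g) : Prop :=
  exists Zs, levi_seq br sigma q Z Zs.

(* Take a Levi-sequence of minimal length k, so that every shorter sequence in
   q brackets Z into q + σ(q).  Split each entry W of q as a + b with
   a ∈ q ∩ σ(q) and b ∈ q ∩ σ(q^c).  An entry a ∈ q ∩ σ(q) can be moved to the
   end of a sequence by the Jacobi identity, at the price of shorter sequences
   only; once at the end, it keeps the (short) commutator in q + σ(q).  Hence,
   by multilinearity, replacing every entry by its σ(q^c)-component changes the
   commutator only by an element of q + σ(q), and the result is again a
   Levi-sequence of length k. *)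
From HB Require Import structures.
From mathcomp Require Import all_boot all_order all_algebra.
From Stdlib Require Import Classical.
Import Order.TTheory GRing.Theory Num.Theory.
Local Open Scope ring_scope.

Lemma ex_minimal_size {T : Type} {P : seq T -> Prop} {s : seq T} :
  P s -> exists2 s0, P s0 & forall t, P t -> (size s0 <= size t)%N.
Proof.
move: {2}(size s) (erefl (size s)) => n; elim/ltn_ind: n s => n IH s size_s Ps.
case: (classic (exists2 t, P t & (size t < n)%N)) => [[t Pt lt_tn]|no_shorter].
  exact: IH lt_tn t erefl Pt.
exists s => // t Pt; rewrite size_s leqNgt; apply/negP => lt_tn.
by apply: no_shorter; exists t.
Qed.

Section LeviSequences.

Context {C : numClosedFieldType} {g : vectType C}.
Context {br : g -> g -> g} {sigma : g -> g} {q : {vspace g}}.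
Hypothesis CR : CR_algebra br sigma q.

Local Notation qsq := (in_q_plus_sq sigma q).

Lemma brDl x y z : br (x + y) z = br x z + br y z.
Proof.
by have [[lin _ _] _ _] := CR; rewrite -{1}(scale1r x) lin scale1r.
Qed.

Lemma brDr x y z : br x (y + z) = br x y + br x z.
Proof. by have [[_ anti _] _ _] := CR; rewrite anti brDl opprD -!anti. Qed.

Lemma brNl x z : br (- x) z = - br x z.
Proof.
have br0l : br 0 z = 0 by apply: (addrI (br 0 z)); rewrite -brDl !addr0.
by apply: (addrI (br x z)); rewrite -brDl !subrr br0l.
Qed.

Lemma jacobi_swap x a w : br (br x a) w = br (br x w) a + br x (br a w).
Proof.
have [[_ anti jacobi] _ _] := CR.
rewrite (anti x (br a w)) (anti x w) brNl -opprD; apply/eqP.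
by rewrite -addr_eq0 [X in _ + X]addrC addrA jacobi.
Qed.

Lemma iter_brD Ws x y : iter_br br (x + y) Ws = iter_br br x Ws + iter_br br y Ws.
Proof. by elim: Ws x y => [//|W Ws IH] x y /=; rewrite brDl IH. Qed.

Lemma iter_br_cat x Vs Ws : iter_br br x (Vs ++ Ws) = iter_br br (iter_br br x Vs) Ws.
Proof. exact: foldl_cat. Qed.

Lemma sigmaD x y : sigma (x + y) = sigma x + sigma y.
Proof.
by have [_ [lin _ _] _] := CR; rewrite -{1}(scale1r x) lin conjC1 !scale1r.
Qed.

Lemma sigma0 : sigma 0 = 0.
Proof. by apply: (addrI (sigma 0)); rewrite -sigmaD !addr0. Qed.

Lemma qsq0 : qsq 0.
Proof. by exists 0, 0; rewrite /in_sig sigma0 mem0v addr0. Qed.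

Lemma qsqD {x y} : qsq x -> qsq y -> qsq (x + y).
Proof.
move=> [a [b [qa [sqb ->]]]] [c [d [qc [sqd ->]]]].
exists (a + c), (b + d); rewrite /in_sig sigmaD !memvD //.
by split=> //; split=> //; rewrite addrACA.
Qed.

Lemma qsq_br_q_sq x a : a \in q -> in_sig sigma q a -> qsq x -> qsq (br x a).
Proof.
have [_ [_ _ sigma_br] q_br] := CR.
move=> qa sqa [b [c [qb [sqc ->]]]].
exists (br b a), (br c a); rewrite brDl /in_sig sigma_br.
by split; [apply: q_br | split=> //; apply: q_br].
Qed.

Context {qc : {vspace g}}.
Hypothesis R : reductive_CR br sigma q qc.

Lemma q_decomp {x} : x \in q ->
  exists a b, [/\ a \in q, in_sig sigma q a, b \in q, in_sig sigma qc b & x = a + b].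
Proof.
have [_ [_ q_cap_qc] _ decomp _] := R.
move=> qx; have [a [b [c [d [[qa sqa] [qb sqb] [qcc _] [qcd _] def_x]]]]] := decomp x.
exists a, b; split=> //.
have cd_q : c + d \in q.
  have -> : c + d = x - (a + b) by rewrite def_x -(addrA (a + b)) [_ + (c + d)]addrC addrK.
  by rewrite memvB // memvD.
have /eqP cd0 : c + d == 0 by rewrite -memv0 -q_cap_qc memv_cap cd_q memvD.
by rewrite def_x -addrA cd0 addr0.
Qed.

Section MinimalLength.

Context {Z : g} {k : nat}.
Hypothesis short_qsq :
  forall Ws, {subset Ws <= q} -> (size Ws < k)%N -> qsq (iter_br br Z Ws).

Lemma qsq_iter_br_q_sq a Vs Ws :
  a \in q -> in_sig sigma q a -> {subset Vs <= q} -> {subset Ws <= q} ->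
  (size Vs + size Ws < k)%N -> qsq (iter_br br Z (Vs ++ a :: Ws)).
Proof.
move=> qa sqa; elim: Ws Vs => [|W Ws IH] Vs Vs_q Ws_q size_lt.
  rewrite addn0 in size_lt.
  by rewrite iter_br_cat /=; apply: qsq_br_q_sq => //; apply: short_qsq.
have qW : W \in q by apply: Ws_q; rewrite mem_head.
have Ws'_q : {subset Ws <= q} by move=> V V_Ws; apply: Ws_q; rewrite inE V_Ws orbT.
rewrite iter_br_cat /= jacobi_swap iter_brD; apply: qsqD.
  have := IH (rcons Vs W); rewrite -cats1 -catA iter_br_cat /=; apply=> //.
    by move=> V; rewrite mem_cat inE => /orP[/Vs_q | /eqP ->].
  by rewrite size_cat addn1 addSn -addnS.
have := short_qsq (Vs ++ br a W :: Ws); rewrite iter_br_cat; apply.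
  have [_ _ q_br] := CR.
  by move=> V; rewrite mem_cat inE => /orP[/Vs_q | /orP[/eqP -> | /Ws'_q]] //; apply: q_br.
by rewrite size_cat /=; apply: leq_ltn_trans size_lt; rewrite addnS.
Qed.

Lemma project_to_q_sqc Vs Ws :
  {subset Vs <= q} -> {subset Ws <= q} -> (size Vs + size Ws <= k)%N ->
  exists Bs, [/\ size Bs = size Ws,
    forall W, W \in Bs -> W \in q /\ in_sig sigma qc W &
    qsq (iter_br br Z (Vs ++ Ws) - iter_br br Z (Vs ++ Bs))].
Proof.
elim: Ws Vs => [|W Ws IH] Vs Vs_q Ws_q size_le.
  by exists [::]; rewrite subrr; split=> //; exact: qsq0.
have qW : W \in q by apply: Ws_q; rewrite mem_head.
have Ws'_q : {subset Ws <= q} by move=> V V_Ws; apply: Ws_q; rewrite inE V_Ws orbT.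
have [a [b [qa sqa qb sqcb def_W]]] := q_decomp qW.
have [|||Bs [size_Bs Bs_qsqc diff]] := IH (rcons Vs b) => //.
- by move=> V; rewrite mem_rcons inE => /orP[/eqP -> | /Vs_q].
- by rewrite size_rcons addSn -addnS.
exists (b :: Bs); split; first by rewrite /= size_Bs.
  by move=> V; rewrite inE => /orP[/eqP -> | /Bs_qsqc].
move: diff; rewrite -!cats1 -!catA /= => diff.
have -> : iter_br br Z (Vs ++ W :: Ws) =
    iter_br br Z (Vs ++ a :: Ws) + iter_br br Z (Vs ++ b :: Ws).
  by rewrite !iter_br_cat /= def_W brDr; apply: iter_brD.
rewrite -addrA; apply: qsqD diff; apply: qsq_iter_br_q_sq => //.
by apply: leq_trans size_le; rewrite addnS.
Qed.

End MinimalLength.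

End LeviSequences.

Theorem lemma3p10 (C : numClosedFieldType) (g : vectType C)
    (br : g -> g -> g) (sigma : g -> g) (q qc : {vspace g}) (Z : g) :
  reductive_CR br sigma q qc ->
  in_sig sigma q Z -> Z \notin q ->
  finite_levi_order br sigma q Z ->
  exists Zs : seq g,
    [/\ levi_seq br sigma q Z Zs,
        (forall Ws, levi_seq br sigma q Z Ws -> (size Zs <= size Ws)%N) &
        (forall W, W \in Zs -> W \in q /\ in_sig sigma qc W)].
Proof.
move=> R _ _ [Zs0 levi_Zs0].
have [CR _ _ _ _] := R.
have [Zs [Zs_q not_qsq] Zs_min] := ex_minimal_size levi_Zs0.
have short_qsq Ws : {subset Ws <= q} -> (size Ws < size Zs)%N ->
    in_q_plus_sq sigma q (iter_br br Z Ws).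
  move=> Ws_q size_lt; apply: NNPP => not_qsq_Ws.
  by have := Zs_min Ws (conj Ws_q not_qsq_Ws); rewrite leqNgt size_lt.
have [||| Bs [size_Bs Bs_qsqc diff]] := project_to_q_sqc CR R short_qsq [::] Zs => //.
have levi_Bs : levi_seq br sigma q Z Bs.
  split=> [W /Bs_qsqc [] // | qsq_Bs]; apply: not_qsq.
  by have := qsqD CR diff qsq_Bs; rewrite subrK.
by exists Bs; split=> // Ws /Zs_min; rewrite size_Bs.
Qed.
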